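(* Consider the line network model (see context) with $\ell$ links and erasure probabilities $p_1,\dots,p_\ell$ having a unique worst link, i.e. there is $m$ with $p_m=\max_i p_i<1$ and $p_i<p_m$ for $i\ne m$. Let $A:=1-\max_{1\le i\le\ell}p_i$ and fix $\delta\in(0,1/2)$. Then for all sufficiently large $n$, $$\mathbb{P}\!\left[\,|T_n-\mathbb{E}T_n|>\frac{n^{1/2+\delta}}{A}\right]\le \frac{2A}{n}+\frac{2A\,n^{2\delta}}{n^2-n^{1+2\delta}}.$$ In particular (Theorem 2), with $\epsilon_n=n^{3/4}/A$, $\mathbb{P}[|T_n-\mathbb{E}T_n|>\epsilon_n]\le \frac{2A}{n}+o(1/n)$.
   Context: Line network model. Fix integers $\ell\ge1$, $n\ge1$ and erasure probabilities $p_1,\dots,p_\ell\in[0,1)$. Let $\{z_{t,i}: t\ge1,\,1\le i\le\ell\}$ be independent Bernoulli random variables with $\mathbb{P}(z_{t,i}=1)=1-p_i$ ($z_{t,i}=1$ means link $i$ is ON at time step $t$). Nodes $N^{(1)},\dots,N^{(\ell+1)}$, link $i$ from $N^{(i)}$ to $N^{(i+1)}$; the source holds $n$ packets and each node sends random linear combinations of its received packets (idealized so a transmission is innovative whenever possible). The rank $\rho_i(t)$ of node $N^{(i)}$ after $t$ steps satisfies $\rho_1(t)=n$, $\rho_i(0)=0$ for $i\ge2$, and $\rho_{i+1}(t)=\rho_{i+1}(t-1)+z_{t,i}\mathbf 1\{\rho_i(t-1)>\rho_{i+1}(t-1)\}$ for $t\ge1$, $1\le i\le \ell$. The completion time is $T_n:=\min\{t\ge0:\rho_{\ell+1}(t)=n\}$.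 *)

From Stdlib Require Import Reals List Arith Bool.
Open Scope R_scope.

(* A realization of the link states: z s i = true iff link i is ON at time s. *)
Definition config := nat -> nat -> bool.

(* rank_ n z t j = rho_j(t), the rank of node N^(j) after t steps (j = 1..l+1). *)
Fixpoint rank_ (n : nat) (z : config) (t : nat) (j : nat) : nat :=
  match t with
  | O => if Nat.eqb j 1 then n else 0%nat
  | S t' =>
      if Nat.eqb j 1 then n
      else if Nat.leb 2 j then
        (rank_ n z t' j +
         (if z t (j - 1) && Nat.ltb (rank_ n z t' j) (rank_ n z t' (j - 1)) then 1 else 0))%nat
      else 0%nat
  end.

(* T_n = t : node l+1 has full rank n at time t and not before. *)
Definition completes_at (l n : nat) (z : config) (t : nat) : bool :=
  Nat.eqb (rank_ n z t (S l)) n &&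
  forallb (fun s => negb (Nat.eqb (rank_ n z s (S l)) n)) (seq 0 t).

Definition upd (z : config) (s i : nat) (b : bool) : config :=
  fun s' i' => if Nat.eqb s' s && Nat.eqb i' i then b else z s' i'.

(* Expectation of F under the product of independent Bernoulli variables
   z_{s,i}, P(z_{s,i}=1) = 1 - p i, for the coordinates (s,i) listed in ps
   (F must only depend on those coordinates). *)
Fixpoint Esum (p : nat -> R) (ps : list (nat * nat)) (F : config -> R) (z : config) : R :=
  match ps with
  | nil => F z
  | (s, i) :: ps' =>
      (1 - p i) * Esum p ps' F (upd z s i true) + p i * Esum p ps' F (upd z s i false)
  end.

Definition coords (t l : nat) : list (nat * nat) :=
  flat_map (fun s => map (fun i => (s, i)) (seq 1 l)) (seq 1 t).

Definition zfalse : config := fun _ _ => false.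

Definition probT (l : nat) (p : nat -> R) (n t : nat) : R :=
  Esum p (coords t l) (fun z => if completes_at l n z t then 1 else 0) zfalse.

Definition maxp (l : nat) (p : nat -> R) : R :=
  fold_right (fun i acc => Rmax (p i) acc) (p 1%nat) (seq 1 l).

From Stdlib Require Import Reals List Arith Bool Lra Lia Psatz ZArith.
Open Scope R_scope.

(* The proof is a pair of Chernoff bounds.  Writing A = 1 - max_i p_i:
   - lower tail: completing by time k needs n ON slots of a worst link, so
     P[T_n <= k] <= e^{-lam n} E[e^{lam #ON}] <= exp(-lam n + A (lam + 2 lam^2) k);
   - upper tail: unfolding the rank recursion along the line ("last time node
     i+1 caught up with node i") gives a random majorant of e^{-lam rho_{l+1}(k)}
     whose expectation, by independence of the links, is at most
     (k+2)^{l-1} r^k / r^{l-1} with r = 1 - A (1 - e^{-lam}).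
   Choosing lam of order n^{-1/2+delta} makes both tails at distance
   n^{1/2+delta} / (4A) from n/A smaller than A / (16 n) for large n; with a
   geometric far-tail bound this locates E T_n within two such windows of n/A
   (via E T_n = sum_s P[T_n > s]), hence the deviation probability is at most
   A / (8n), below the bound of the theorem. *)

Definition depends_on (C : nat -> nat -> Prop) (F : config -> R) : Prop :=
  forall z z', (forall s i, C s i -> z s i = z' s i) -> F z = F z'.

Lemma upd_same z s i b : upd z s i b s i = b.
Proof. unfold upd. rewrite !Nat.eqb_refl. reflexivity. Qed.

Lemma upd_other z s i b s' i' : (s', i') <> (s, i) -> upd z s i b s' i' = z s' i'.
Proof.
  intros Hne. unfold upd.
  destruct (Nat.eqb_spec s' s), (Nat.eqb_spec i' i); subst; simpl; congruence.
Qed.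

Lemma depends_on_upd C F z s i b : depends_on C F -> ~ C s i -> F (upd z s i b) = F z.
Proof.
  intros HF Hc. apply HF. intros s' i' Hc'. apply upd_other.
  intros E. inversion E; subst. contradiction.
Qed.

Section Esum.
Variable p : nat -> R.

Lemma Esum_ext ps F G z : (forall z, F z = G z) -> Esum p ps F z = Esum p ps G z.
Proof.
  revert z. induction ps as [|[s i] ps IH]; intros z H; simpl; auto.
  rewrite !IH; auto.
Qed.

Lemma Esum_plus ps F G z :
  Esum p ps (fun z => F z + G z) z = Esum p ps F z + Esum p ps G z.
Proof. revert z. induction ps as [|[s i] ps IH]; intros z; simpl; auto. rewrite !IH. ring. Qed.

Lemma Esum_scal ps c F z : Esum p ps (fun z => c * F z) z = c * Esum p ps F z.
Proof. revert z. induction ps as [|[s i] ps IH]; intros z; simpl; auto. rewrite !IH. ring. Qed.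

Lemma Esum_const ps c z : Esum p ps (fun _ => c) z = c.
Proof. revert z. induction ps as [|[s i] ps IH]; intros z; simpl; auto. rewrite !IH. ring. Qed.

Lemma Esum_le ps F G z : (forall s i, In (s, i) ps -> 0 <= p i <= 1) ->
  (forall z, F z <= G z) -> Esum p ps F z <= Esum p ps G z.
Proof.
  revert z. induction ps as [|[s i] ps IH]; intros z Hp H; simpl; auto.
  assert (Hpi := Hp s i (or_introl eq_refl)).
  assert (IH' : forall z, Esum p ps F z <= Esum p ps G z)
    by (intros; apply IH; auto; intros; eapply Hp; right; eauto).
  pose proof (IH' (upd z s i true)). pose proof (IH' (upd z s i false)).
  apply Rplus_le_compat; apply Rmult_le_compat_l; lra.
Qed.

Lemma Esum_app ps qs F z : Esum p (ps ++ qs) F z = Esum p ps (fun z' => Esum p qs F z') z.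
Proof. revert z. induction ps as [|[s i] ps IH]; intros z; simpl; auto. rewrite !IH. auto. Qed.

Lemma Esum_depends_on C ps F : depends_on C F -> depends_on C (Esum p ps F).
Proof.
  intros HF. induction ps as [|[s i] ps IH]; simpl; auto.
  intros z z' H.
  rewrite (IH (upd z s i true) (upd z' s i true)), (IH (upd z s i false) (upd z' s i false));
    [reflexivity| |]; intros s' i' Hc; unfold upd; destruct (_ && _); auto.
Qed.

Lemma Esum_irrelevant C ps F z : depends_on C F ->
  (forall s i, In (s, i) ps -> ~ C s i) -> Esum p ps F z = F z.
Proof.
  intros HF. revert z. induction ps as [|[s i] ps IH]; intros z Hn; simpl; auto.
  rewrite !IH by (intros; apply Hn; simpl; auto).
  rewrite !(depends_on_upd C F) by (auto; apply Hn; simpl; auto). ring.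
Qed.

Lemma Esum_mul C D ps F G z : depends_on C F -> depends_on D G ->
  (forall s i, In (s, i) ps -> ~ C s i \/ ~ D s i) ->
  Esum p ps (fun z => F z * G z) z = Esum p ps F z * Esum p ps G z.
Proof.
  intros HF HG. revert z. induction ps as [|[s i] ps IH]; intros z Hn; simpl; auto.
  rewrite !IH by (intros; apply Hn; simpl; auto).
  destruct (Hn s i (or_introl eq_refl)) as [Hc|Hc].
  - rewrite !(depends_on_upd C (Esum p ps F)) by auto using Esum_depends_on. ring.
  - rewrite !(depends_on_upd D (Esum p ps G)) by auto using Esum_depends_on. ring.
Qed.

Lemma nat_pair_eq_dec (x y : nat * nat) : {x = y} + {x <> y}.
Proof. decide equality; apply Nat.eq_dec. Defined.

Lemma Esum_single ps s i g z : In (s, i) ps ->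
  Esum p ps (fun z => g (z s i)) z = (1 - p i) * g true + p i * g false.
Proof.
  set (C := fun a b => a = s /\ b = i).
  assert (HC : forall h, depends_on C (fun z => h (z s i)))
    by (intros h z1 z2 H; rewrite H; unfold C; auto).
  revert z. induction ps as [|[s' i'] ps IH]; intros z Hin; simpl in *; [contradiction|].
  destruct (in_dec nat_pair_eq_dec (s, i) ps) as [Hi|Hi].
  - rewrite !IH by auto. destruct Hin as [E|E]; [inversion E; subst|]; ring.
  - destruct Hin as [E|E]; [|contradiction]. inversion E; subst.
    rewrite !(Esum_irrelevant C) by (auto; intros a b H [-> ->]; contradiction).
    rewrite !upd_same. reflexivity.
Qed.

End Esum.

Fixpoint on_count (z : config) (i a t : nat) : nat :=
  match t with
  | O => O
  | S t' => (on_count z i a t' + (if Nat.leb a (S t') && z (S t') i then 1 else 0))%nat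
  end.

Lemma on_count_before i a t z : (t < a)%nat -> on_count z i a t = 0%nat.
Proof.
  induction t; simpl; auto. intros H. rewrite IHt by lia.
  destruct (Nat.leb_spec a (S t)); [lia|reflexivity].
Qed.

Lemma on_count_depends i a t z z' : (forall s, (1 <= s <= t)%nat -> z s i = z' s i) ->
  on_count z i a t = on_count z' i a t.
Proof.
  induction t; simpl; intros H; auto.
  rewrite IHt by (intros; apply H; lia). rewrite H by lia. reflexivity.
Qed.

Section Rank.
Variables (n : nat) (z : config).
Local Notation rk := (rank_ n z).

Lemma rank_source t : rk t 1 = n.
Proof. destruct t; reflexivity. Qed.

Lemma rank_init j : (2 <= j)%nat -> rk 0 j = 0%nat.
Proof. intros H. simpl. destruct (Nat.eqb_spec j 1); [lia|auto]. Qed.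

Lemma rank_step t i : (1 <= i)%nat ->
  rk (S t) (S i) =
  (rk t (S i) + (if z (S t) i && Nat.ltb (rk t (S i)) (rk t i) then 1 else 0))%nat.
Proof. intros H. destruct i; [lia|reflexivity]. Qed.

Lemma rank_mono_step t j : (rk t j <= rk (S t) j)%nat.
Proof.
  destruct j as [|[|i]].
  - destruct t; simpl; lia.
  - rewrite !rank_source; lia.
  - rewrite rank_step by lia. lia.
Qed.

Lemma rank_le_pred t i : (1 <= i)%nat -> (rk t (S i) <= rk t i)%nat.
Proof.
  intros Hi. induction t.
  - rewrite (rank_init (S i)) by lia. lia.
  - rewrite rank_step by auto. pose proof (rank_mono_step t i).
    destruct (z (S t) i); rewrite ?andb_true_l, ?andb_false_l; [|lia].
    destruct (Nat.ltb_spec (rk t (S i)) (rk t i)); lia.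
Qed.

Lemma rank_le_n t j : (rk t j <= n)%nat.
Proof.
  induction j as [|[|i] IH].
  - destruct t; simpl; lia.
  - rewrite rank_source; lia.
  - pose proof (rank_le_pred t (S i)); lia.
Qed.

Lemma rank_le_downstream t m l : (1 <= m <= l)%nat -> (rk t (S l) <= rk t (S m))%nat.
Proof. intros [H1 H2]. induction H2; auto. pose proof (rank_le_pred t (S m0)); lia. Qed.

Lemma rank_le_on_count t i : (1 <= i)%nat -> (rk t (S i) <= on_count z i 1 t)%nat.
Proof.
  intros Hi. induction t.
  - rewrite (rank_init (S i)) by lia. simpl; lia.
  - rewrite rank_step by auto. simpl on_count. destruct (z (S t) i); simpl; [|lia].
    destruct (Nat.ltb (rk t (S i)) (rk t i)); lia.
Qed.

(* Last-idle-time decomposition: either node i+1 used every ON slot of link i,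
   or, u being the last step at which node i+1 had caught up with node i, it
   holds rank rk u i plus the ON slots of link i after step u+1. *)
Lemma rank_decomp t i : (1 <= i)%nat ->
  rk t (S i) = on_count z i 1 t \/
  exists u, (u <= t)%nat /\ rk t (S i) = (rk u i + on_count z i (u + 2) t)%nat.
Proof.
  intros Hi. induction t.
  - left. rewrite (rank_init (S i)) by lia. reflexivity.
  - rewrite rank_step by auto. pose proof (rank_le_pred t i Hi).
    destruct (Nat.ltb_spec (rk t (S i)) (rk t i)).
    + rewrite andb_true_r. destruct IHt as [E|[u [Hu E]]].
      * left. cbn [on_count]. rewrite E. reflexivity.
      * assert (u < t)%nat by (destruct (Nat.eq_dec u t); [subst; lia|lia]).
        right. exists u. split; [lia|]. cbn [on_count]. rewrite E.
        replace (Nat.leb (u + 2) (S t)) with true by (symmetry; apply Nat.leb_le; lia).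
        rewrite andb_true_l. lia.
    + right. exists t. split; [lia|]. rewrite andb_false_r, on_count_before by lia. lia.
Qed.

End Rank.

Lemma rank_depends n t : forall j z z',
  (forall s i, (1 <= s <= t)%nat -> (1 <= i)%nat -> (i < j)%nat -> z s i = z' s i) ->
  rank_ n z t j = rank_ n z' t j.
Proof.
  induction t; intros j z z' H; [reflexivity|].
  destruct j as [|[|i]]; [reflexivity|rewrite !rank_source; auto|].
  rewrite !rank_step by lia.
  rewrite (IHt (S (S i)) z z'), (IHt (S i) z z') by (intros; apply H; lia).
  rewrite (H (S t) (S i)) by lia. reflexivity.
Qed.

(* Since the rank of the sink is nondecreasing, T_n = t iff the sink is full
   at time t and was not at time t-1. *)
Lemma completes_at_eq l n z t : completes_at l n z t =
  Nat.eqb (rank_ n z t (S l)) n &&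
  match t with O => true | S t' => negb (Nat.eqb (rank_ n z t' (S l)) n) end.
Proof.
  unfold completes_at. destruct t as [|t]; auto. f_equal.
  induction t.
  - simpl. rewrite andb_true_r. reflexivity.
  - rewrite seq_S, forallb_app, IHt. cbn [forallb]. rewrite andb_true_r, Nat.add_0_l.
    pose proof (rank_mono_step n z t (S l)). pose proof (rank_le_n n z (S t) (S l)).
    destruct (Nat.eqb_spec (rank_ n z t (S l)) n), (Nat.eqb_spec (rank_ n z (S t) (S l)) n);
      simpl; auto; lia.
Qed.

Definition indb (b : bool) : R := if b then 1 else 0.

Lemma in_coords s i T l : In (s, i) (coords T l) <-> (1 <= s <= T /\ 1 <= i <= l)%nat.
Proof.
  unfold coords. rewrite in_flat_map. split.
  - intros [x [Hx Hy]]. apply in_seq in Hx. apply in_map_iff in Hy.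
    destruct Hy as [y [E Hy]]. inversion E; subst. apply in_seq in Hy. lia.
  - intros H. exists s. split; [apply in_seq; lia|].
    apply in_map_iff. exists i. split; auto. apply in_seq; lia.
Qed.

Lemma coords_split t T l : (t <= T)%nat ->
  exists rest, coords T l = coords t l ++ rest /\ forall s i, In (s, i) rest -> (t < s)%nat.
Proof.
  intros H. unfold coords. replace T with (t + (T - t))%nat by lia.
  rewrite seq_app, flat_map_app. eexists. split; [reflexivity|].
  intros s i Hin. apply in_flat_map in Hin. destruct Hin as [x [Hx Hy]]. apply in_seq in Hx.
  apply in_map_iff in Hy. destruct Hy as [y [E _]]. inversion E; subst. lia.
Qed.

Section Distribution.
Variables (l : nat) (p : nat -> R).
Hypothesis hp : forall i, (1 <= i <= l)%nat -> 0 <= p i < 1.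

Definition expect (T : nat) (F : config -> R) : R := Esum p (coords T l) F zfalse.

Lemma expect_extend t T F :
  depends_on (fun s i => (s <= t)%nat) F -> (t <= T)%nat -> expect T F = expect t F.
Proof.
  intros HF H. destruct (coords_split t T l H) as [rest [E Hr]].
  unfold expect. rewrite E, Esum_app. apply Esum_ext. intros z.
  apply (Esum_irrelevant p (fun s i => (s <= t)%nat)); auto.
  intros s i Hi. specialize (Hr s i Hi). lia.
Qed.

Lemma expect_le T F G : (forall z, F z <= G z) -> expect T F <= expect T G.
Proof.
  intros H. apply Esum_le; auto. intros s i Hi. apply in_coords in Hi.
  specialize (hp i ltac:(lia)). lra.
Qed.

Lemma expect_plus T F G : expect T (fun z => F z + G z) = expect T F + expect T G.
Proof. apply Esum_plus. Qed.

Lemma expect_scal T c F : expect T (fun z => c * F z) = c * expect T F.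
Proof. apply Esum_scal. Qed.

Lemma expect_const T c : expect T (fun _ => c) = c.
Proof. apply Esum_const. Qed.

Lemma expect_ext T F G : (forall z, F z = G z) -> expect T F = expect T G.
Proof. apply Esum_ext. Qed.

Lemma expect_nonneg T F : (forall z, 0 <= F z) -> 0 <= expect T F.
Proof. intros H. rewrite <- (expect_const T 0). apply expect_le. exact H. Qed.

Lemma expect_sum T (f : nat -> config -> R) M :
  expect T (fun z => sum_f_R0 (fun t => f t z) M) = sum_f_R0 (fun t => expect T (f t)) M.
Proof. induction M; simpl; auto. rewrite expect_plus, IHM. reflexivity. Qed.

Variable n : nat.

Definition cdfT (k : nat) : R := expect k (fun z => indb (Nat.eqb (rank_ n z k (S l)) n)).

Lemma full_rank_depends k k' : (k <= k')%nat ->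
  depends_on (fun s i => (s <= k')%nat) (fun z => indb (Nat.eqb (rank_ n z k (S l)) n)).
Proof.
  intros Hk z z' H. rewrite (rank_depends n k (S l) z z'); auto. intros; apply H; lia.
Qed.

Lemma sum_completes_at z M :
  sum_f_R0 (fun t => indb (completes_at l n z t)) M = indb (Nat.eqb (rank_ n z M (S l)) n).
Proof.
  induction M; cbn [sum_f_R0]; rewrite completes_at_eq; [rewrite andb_true_r; reflexivity|].
  rewrite IHM. pose proof (rank_mono_step n z M (S l)). pose proof (rank_le_n n z (S M) (S l)).
  unfold indb.
  destruct (Nat.eqb_spec (rank_ n z M (S l)) n), (Nat.eqb_spec (rank_ n z (S M) (S l)) n);
    simpl; try lra; lia.
Qed.

Lemma sum_probT M : sum_f_R0 (probT l p n) M = cdfT M.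
Proof.
  unfold cdfT.
  rewrite <- (expect_ext M (fun z => sum_f_R0 (fun t => indb (completes_at l n z t)) M))
    by (intros; apply sum_completes_at).
  rewrite expect_sum.
  apply sum_eq. intros t Ht. symmetry. apply expect_extend; auto.
  intros z z' H. rewrite !completes_at_eq.
  destruct t as [|t'].
  - rewrite (rank_depends n 0 (S l) z z'); auto. intros; apply H; lia.
  - rewrite (rank_depends n (S t') (S l) z z'), (rank_depends n t' (S l) z z'); auto;
      intros; apply H; lia.
Qed.

Lemma probT_0 : probT l p n 0 = cdfT 0.
Proof. rewrite <- sum_probT. reflexivity. Qed.

Lemma probT_S t : probT l p n (S t) = cdfT (S t) - cdfT t.
Proof. rewrite <- !sum_probT. simpl. ring. Qed.

Lemma cdfT_mono_step k : cdfT k <= cdfT (S k).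
Proof.
  unfold cdfT. rewrite <- (expect_extend k (S k)); [|apply full_rank_depends; lia|lia].
  apply expect_le. intros z.
  pose proof (rank_mono_step n z k (S l)). pose proof (rank_le_n n z (S k) (S l)). unfold indb.
  destruct (Nat.eqb_spec (rank_ n z k (S l)) n), (Nat.eqb_spec (rank_ n z (S k) (S l)) n);
    try lra; lia.
Qed.

Lemma cdfT_mono k k' : (k <= k')%nat -> cdfT k <= cdfT k'.
Proof. induction 1; [lra|]. pose proof (cdfT_mono_step m); lra. Qed.

Lemma cdfT_range k : 0 <= cdfT k <= 1.
Proof.
  split; [apply expect_nonneg|rewrite <- (expect_const k 1); apply expect_le];
    intros; unfold indb; destruct (_ =? _); lra.
Qed.

Lemma probT_nonneg t : 0 <= probT l p n t.
Proof.
  destruct t; [rewrite probT_0; apply cdfT_range|].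
  rewrite probT_S. pose proof (cdfT_mono_step t). lra.
Qed.

Lemma survival_eq k : 1 - cdfT k = expect k (fun z => indb (Nat.ltb (rank_ n z k (S l)) n)).
Proof.
  unfold cdfT. rewrite <- (expect_const k 1) at 1.
  replace (expect k (fun _ => 1) - _) with
    (expect k (fun _ => 1) + (-1) * expect k (fun z => indb (Nat.eqb (rank_ n z k (S l)) n)))
    by ring.
  rewrite <- expect_scal, <- expect_plus. apply expect_ext. intros z.
  pose proof (rank_le_n n z k (S l)). unfold indb.
  destruct (Nat.eqb_spec (rank_ n z k (S l)) n), (Nat.ltb_spec (rank_ n z k (S l)) n);
    try lra; lia.
Qed.

End Distribution.

Lemma pow_le_one r k : 0 <= r <= 1 -> r ^ k <= 1.
Proof. intros H. rewrite <- (pow1 k). apply pow_incr. lra. Qed.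

Lemma pow_antimono r a b : 0 <= r <= 1 -> (b <= a)%nat -> r ^ a <= r ^ b.
Proof.
  intros Hr H. replace a with (b + (a - b))%nat by lia. rewrite pow_add.
  pose proof (pow_le r b (proj1 Hr)). pose proof (pow_le_one r (a - b) Hr).
  pose proof (pow_le r (a - b) (proj1 Hr)). nra.
Qed.

Lemma sum_term_le (f : nat -> R) u t :
  (forall k, 0 <= f k) -> (u <= t)%nat -> f u <= sum_f_R0 f t.
Proof.
  intros Hf H. induction t.
  - replace u with 0%nat by lia. simpl. lra.
  - simpl. destruct (Nat.eq_dec u (S t)) as [->|Hne].
    + pose proof (cond_pos_sum f t Hf). lra.
    + specialize (IHt ltac:(lia)). specialize (Hf (S t)). lra.
Qed.

Lemma exp_pow_nat x k : exp (INR k * x) = exp x ^ k.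
Proof.
  induction k; [simpl; rewrite Rmult_0_l, exp_0; reflexivity|].
  rewrite S_INR, Rmult_plus_distr_r, Rmult_1_l, exp_plus, IHk. simpl. ring.
Qed.

Lemma exp_le_mono x y : x <= y -> exp x <= exp y.
Proof. intros [H|H]; [apply Rlt_le, exp_increasing; auto|subst; lra]. Qed.

Lemma exp_half_sq x : exp x = exp (x / 2) * exp (x / 2).
Proof. rewrite <- exp_plus. f_equal. field. Qed.

Lemma one_minus_exp_neg_ge lam : 0 <= lam -> lam - lam ^ 2 <= 1 - exp (- lam).
Proof.
  intros H. rewrite exp_Ropp.
  assert (E : 1 + lam + lam ^ 2 / 4 <= exp lam).
  { rewrite exp_half_sq. pose proof (exp_ineq1_le (lam / 2)). nra. }
  assert (/ exp lam <= / (1 + lam + lam ^ 2 / 4)) by (apply Rinv_le_contravar; nra).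
  assert (/ (1 + lam + lam ^ 2 / 4) <= 1 - lam + lam ^ 2).
  { apply (Rmult_le_reg_r (1 + lam + lam ^ 2 / 4)); [nra|]. rewrite Rinv_l by nra. nra. }
  lra.
Qed.

Lemma exp_le_quadratic lam : 0 <= lam <= 1 -> exp lam <= 1 + lam + 2 * lam ^ 2.
Proof.
  intros H.
  assert (E : (1 - lam / 2) ^ 2 <= exp (- lam)).
  { rewrite exp_half_sq. pose proof (exp_ineq1_le (- lam / 2)).
    replace (- lam / 2) with (- (lam / 2)) in * by field. simpl. nra. }
  rewrite <- (Rinv_inv (exp lam)), <- exp_Ropp.
  apply (Rmult_le_reg_r (exp (- lam))); [apply exp_pos|].
  rewrite Rinv_l by (apply Rgt_not_eq, exp_pos).
  assert (0 <= lam ^ 2 * ((1 - lam) * (5 / 2 - lam)))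
    by (apply Rmult_le_pos; [nra|apply Rmult_le_pos; lra]).
  assert (1 <= (1 + lam + 2 * lam ^ 2) * (1 - lam / 2) ^ 2) by nra.
  nra.
Qed.

(* A random majorant of e^{-lam rho_{i+1}(t)} on the event rho_{i+1}(t) < n,
   obtained by unfolding [rank_decomp] along the line: either all ON slots of
   link i were used, or node i+1 last caught up with node i at some step u. *)
Fixpoint rank_majorant (lam : R) (z : config) (i t : nat) : R :=
  match i with
  | O => 0
  | S i' => exp (- lam * INR (on_count z i 1 t)) +
            sum_f_R0 (fun u => rank_majorant lam z i' u *
                               exp (- lam * INR (on_count z i (u + 2) t))) t
  end.

Lemma majorant_terms_nonneg lam z i t :
  (forall u, 0 <= rank_majorant lam z i u) ->
  forall u, 0 <= rank_majorant lam z i u * exp (- lam * INR (on_count z (S i) (u + 2) t)).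
Proof. intros H u. apply Rmult_le_pos; [apply H|apply Rlt_le, exp_pos]. Qed.

Lemma rank_majorant_nonneg lam z i t : 0 <= rank_majorant lam z i t.
Proof.
  revert t. induction i; intros t; simpl; [lra|].
  pose proof (exp_pos (- lam * INR (on_count z (S i) 1 t))).
  pose proof (cond_pos_sum _ t (majorant_terms_nonneg lam z i t IHi)). lra.
Qed.

Lemma rank_majorant_depends lam i t :
  depends_on (fun s k => (k <= i)%nat) (fun z => rank_majorant lam z i t).
Proof.
  revert t. induction i; intros t z z' H; simpl; auto.
  rewrite (on_count_depends (S i) 1 t z z') by (intros; apply H; lia).
  f_equal. apply sum_eq. intros u _. rewrite (IHi u z z') by (intros; apply H; lia).
  rewrite (on_count_depends (S i) (u + 2) t z z') by (intros; apply H; lia). reflexivity.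
Qed.

Lemma rank_majorant_spec n z lam : 0 <= lam -> forall i t,
  (rank_ n z t (S i) < n)%nat -> exp (- lam * INR (rank_ n z t (S i))) <= rank_majorant lam z i t.
Proof.
  intros Hl i. induction i; intros t H; [rewrite rank_source in H; lia|].
  pose proof (cond_pos_sum _ t (majorant_terms_nonneg lam z i t (rank_majorant_nonneg lam z i))).
  pose proof (exp_pos (- lam * INR (on_count z (S i) 1 t))).
  simpl rank_majorant.
  destruct (rank_decomp n z t (S i) ltac:(lia)) as [E|[u [Hu E]]]; rewrite E; [lra|].
  rewrite plus_INR, Rmult_plus_distr_l, exp_plus.
  assert (IH := IHi u ltac:(lia)).
  pose proof (exp_pos (- lam * INR (on_count z (S i) (u + 2) t))).
  pose proof (sum_term_le _ u t (majorant_terms_nonneg lam z i t (rank_majorant_nonneg lam z i)) Hu).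
  simpl in *. nra.
Qed.

Definition majorant_bound (r : R) (i t : nat) : R :=
  match i with O => 0 | S i' => INR (t + 2) ^ i' * r ^ t / r ^ i' end.

Lemma majorant_bound_term r i u t : 0 < r <= 1 -> (u <= t)%nat ->
  majorant_bound r (S i) u * r ^ (S t - (u + 2)) <= INR (t + 2) ^ i * (r ^ t / r ^ S i).
Proof.
  intros Hr Hu. simpl majorant_bound.
  assert (E1 : r ^ u * r ^ (S t - (u + 2)) * r <= r ^ t).
  { replace (r ^ u * r ^ (S t - (u + 2)) * r) with (r ^ (u + (S t - (u + 2)) + 1))
      by (rewrite !pow_add; ring).
    apply pow_antimono; [lra|lia]. }
  assert (E2 : INR (u + 2) ^ i <= INR (t + 2) ^ i)
    by (apply pow_incr; split; [apply pos_INR|apply le_INR; lia]).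
  pose proof (pow_lt r i (proj1 Hr)). pose proof (pow_le (INR (u + 2)) i (pos_INR _)).
  pose proof (pow_le r u ltac:(lra)). pose proof (pow_le r (S t - (u + 2)) ltac:(lra)).
  apply (Rmult_le_reg_r (r ^ S i)); [apply pow_lt; lra|].
  replace (INR (u + 2) ^ i * r ^ u / r ^ i * r ^ (S t - (u + 2)) * r ^ S i)
    with (INR (u + 2) ^ i * (r ^ u * r ^ (S t - (u + 2)) * r)) by (simpl; field; lra).
  replace (INR (t + 2) ^ i * (r ^ t / r ^ S i) * r ^ S i) with (INR (t + 2) ^ i * r ^ t)
    by (simpl; field; lra).
  apply Rmult_le_compat; auto. apply Rmult_le_pos; [nra|lra].
Qed.

Lemma majorant_bound_step r i t : 0 < r <= 1 ->
  r ^ t + INR (S t) * (INR (t + 2) ^ i * (r ^ t / r ^ S i)) <= majorant_bound r (S (S i)) t.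
Proof.
  intros Hr. simpl majorant_bound.
  set (X := r ^ t / r ^ S i).
  assert (HX : r ^ t <= X).
  { unfold X. pose proof (pow_lt r (S i) (proj1 Hr)). pose proof (pow_le_one r (S i) ltac:(lra)).
    pose proof (pow_le r t ltac:(lra)).
    apply (Rmult_le_reg_r (r ^ S i)); [lra|]. unfold Rdiv.
    rewrite Rmult_assoc, Rinv_l by lra. nra. }
  assert (HY : 1 <= INR (t + 2) ^ i)
    by (apply pow_R1_Rle; rewrite plus_INR; simpl; pose proof (pos_INR t); lra).
  replace (INR (t + 2) * INR (t + 2) ^ i * r ^ t / (r * r ^ i))
    with (INR (t + 2) * INR (t + 2) ^ i * X) by (unfold X; simpl; field; split; [apply pow_nonzero|]; lra).
  rewrite S_INR, plus_INR in *. simpl INR in *. pose proof (pow_le r t ltac:(lra)). nra.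
Qed.

Section Moments.
Variables (l : nat) (p : nat -> R).
Hypothesis hp : forall i, (1 <= i <= l)%nat -> 0 <= p i < 1.

(* Moment generating function of the number of ON slots of link k in [a, t]:
   each slot contributes a factor (1 - p k) e^c + p k <= w. *)
Lemma on_count_mgf c w k a t T : (1 <= k <= l)%nat -> (1 <= a)%nat -> (t <= T)%nat ->
  0 <= w -> (1 - p k) * exp c + p k <= w ->
  expect l p T (fun z => exp (c * INR (on_count z k a t))) <= w ^ (S t - a).
Proof.
  intros Hk Ha Ht Hw Hc. induction t.
  - cbn [on_count INR]. rewrite Rmult_0_r, exp_0, expect_const.
    replace (1 - a)%nat with 0%nat by lia. simpl; lra.
  - cbn [on_count]. destruct (Nat.leb_spec a (S t)); cbn [andb].
    + rewrite (expect_ext l p T _ (fun z => exp (c * INR (on_count z k a t)) *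
                                       exp (c * INR (if z (S t) k then 1%nat else 0%nat))))
        by (intros z; rewrite plus_INR, Rmult_plus_distr_l, exp_plus; reflexivity).
      unfold expect. rewrite (Esum_mul p (fun s i => (s <= t)%nat) (fun s i => s = S t)).
      * fold (expect l p T (fun z => exp (c * INR (on_count z k a t)))).
        rewrite (Esum_single p _ (S t) k (fun b => exp (c * INR (if b then 1%nat else 0%nat))))
          by (apply in_coords; lia).
        simpl INR. rewrite Rmult_0_r, exp_0, Rmult_1_r.
        replace (S (S t) - a)%nat with (S (S t - a)) by lia. rewrite <- tech_pow_Rmult.
        assert (0 <= expect l p T (fun z => exp (c * INR (on_count z k a t))))
          by (apply expect_nonneg; auto; intros; apply Rlt_le, exp_pos).
        specialize (IHt ltac:(lia)). pose proof (pow_le w (S t - a) Hw). nra.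
      * intros z z' Hzz. rewrite (on_count_depends k a t z z'); auto. intros; apply Hzz; lia.
      * intros z z' Hzz. rewrite Hzz; auto.
      * intros s i _. lia.
    + rewrite (expect_ext l p T _ (fun z => exp (c * INR (on_count z k a t))))
        by (intros; rewrite Nat.add_0_r; reflexivity).
      replace (S (S t) - a)%nat with 0%nat by lia.
      specialize (IHt ltac:(lia)). replace (S t - a)%nat with 0%nat in IHt by lia. exact IHt.
Qed.

Lemma majorant_expect_bound lam r : 0 <= lam -> 0 < r <= 1 ->
  (forall k, (1 <= k <= l)%nat -> (1 - p k) * exp (- lam) + p k <= r) ->
  forall i, (i <= l)%nat -> forall t T, (t <= T)%nat ->
  expect l p T (fun z => rank_majorant lam z i t) <= majorant_bound r i t.
Proof.
  intros Hl Hr Hk i. induction i; intros Hi t T Ht; [simpl; rewrite expect_const; lra|].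
  simpl rank_majorant. rewrite expect_plus, expect_sum.
  assert (Hfirst : expect l p T (fun z => exp (- lam * INR (on_count z (S i) 1 t))) <= r ^ t).
  { pose proof (on_count_mgf (- lam) r (S i) 1 t T ltac:(lia) ltac:(lia) Ht ltac:(lra)
      (Hk (S i) ltac:(lia))) as X.
    replace (S t - 1)%nat with t in X by lia. exact X. }
  assert (Hterm : forall u, (u <= t)%nat ->
    expect l p T (fun z => rank_majorant lam z i u * exp (- lam * INR (on_count z (S i) (u + 2) t)))
    <= majorant_bound r i u * r ^ (S t - (u + 2))).
  { intros u Hu. unfold expect.
    rewrite (Esum_mul p (fun s k => (k <= i)%nat) (fun s k => k = S i));
      [| apply rank_majorant_depends
       | intros z z' H; rewrite (on_count_depends (S i) (u + 2) t z z'); auto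
       | intros s k _; lia].
    fold (expect l p T (fun z => rank_majorant lam z i u)).
    fold (expect l p T (fun z => exp (- lam * INR (on_count z (S i) (u + 2) t)))).
    pose proof (IHi ltac:(lia) u T ltac:(lia)).
    pose proof (on_count_mgf (- lam) r (S i) (u + 2) t T ltac:(lia) ltac:(lia) Ht ltac:(lra)
      (Hk (S i) ltac:(lia))).
    pose proof (expect_nonneg l p hp T _ (fun z => rank_majorant_nonneg lam z i u)).
    pose proof (expect_nonneg l p hp T (fun z => exp (- lam * INR (on_count z (S i) (u + 2) t)))
      (fun z => Rlt_le _ _ (exp_pos _))).
    apply Rmult_le_compat; auto. }
  destruct i as [|i'].
  - assert (sum_f_R0 (fun u => expect l p T (fun z => rank_majorant lam z 0 u *
                exp (- lam * INR (on_count z 1 (u + 2) t)))) t <= 0).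
    { rewrite <- (Rmult_0_l (INR (S t))), <- sum_cte. apply sum_Rle.
      intros u Hu. specialize (Hterm u Hu). simpl majorant_bound in Hterm. lra. }
    replace (majorant_bound r 1 t) with (r ^ t) by (simpl; field). lra.
  - eapply Rle_trans; [|apply majorant_bound_step; exact Hr].
    apply Rplus_le_compat; [exact Hfirst|]. rewrite Rmult_comm, <- sum_cte. apply sum_Rle.
    intros u Hu. eapply Rle_trans; [apply Hterm; exact Hu|]. apply majorant_bound_term; auto.
Qed.

End Moments.

Lemma fold_Rmax_ge (p : nat -> R) L d i : In i L ->
  p i <= fold_right (fun i acc => Rmax (p i) acc) d L.
Proof.
  induction L as [|a L IH]; simpl; intros H; [contradiction|].
  destruct H as [->|H]; [apply Rmax_l|].
  specialize (IH H). pose proof (Rmax_r (p a) (fold_right (fun i acc => Rmax (p i) acc) d L)). lra.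
Qed.

Lemma fold_Rmax_attained (p : nat -> R) L d :
  fold_right (fun i acc => Rmax (p i) acc) d L = d \/
  exists i, In i L /\ fold_right (fun i acc => Rmax (p i) acc) d L = p i.
Proof.
  induction L as [|a L IH]; simpl; auto.
  apply Rmax_case; [right; exists a; auto|].
  destruct IH as [E|[i [Hi E]]]; auto. right; exists i; auto.
Qed.

Section Tails.
Variables (l : nat) (p : nat -> R).
Hypothesis hl : (1 <= l)%nat.
Hypothesis hp : forall i, (1 <= i <= l)%nat -> 0 <= p i < 1.

(* A = 1 - max_i p_i, the success probability of the worst link (the min-cut rate). *)
Definition capacity : R := 1 - maxp l p.

Lemma maxp_ge i : (1 <= i <= l)%nat -> p i <= maxp l p.
Proof. intros H. apply fold_Rmax_ge. apply in_seq. lia. Qed.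

Lemma maxp_attained : exists m, (1 <= m <= l)%nat /\ maxp l p = p m.
Proof.
  unfold maxp. destruct (fold_Rmax_attained p (seq 1 l) (p 1%nat)) as [E|[i [Hi E]]].
  - exists 1%nat. split; [lia|auto].
  - exists i. apply in_seq in Hi. split; [lia|auto].
Qed.

Lemma capacity_range : 0 < capacity <= 1.
Proof.
  unfold capacity. destruct maxp_attained as [m [Hm E]]. rewrite E.
  pose proof (hp m Hm). pose proof (maxp_ge 1 ltac:(lia)). pose proof (hp 1%nat ltac:(lia)).
  rewrite E in *. lra.
Qed.

Variable n : nat.

(* Markov step: on {rho_{l+1}(k) < n}, 1 <= e^{lam n} e^{-lam rho_{l+1}(k)}. *)
Lemma survival_le_majorant lam k : 0 <= lam ->
  1 - cdfT l p n k <= exp (lam * INR n) * expect l p k (fun z => rank_majorant lam z l k).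
Proof.
  intros Hlam. rewrite survival_eq, <- expect_scal. apply expect_le; auto. intros z.
  pose proof (rank_majorant_nonneg lam z l k). pose proof (exp_pos (lam * INR n)).
  unfold indb. destruct (Nat.ltb_spec (rank_ n z k (S l)) n) as [Hlt|Hge]; [|nra].
  pose proof (rank_majorant_spec n z lam Hlam l k Hlt).
  assert (1 <= exp (lam * INR n) * exp (- lam * INR (rank_ n z k (S l)))).
  { rewrite <- exp_plus, <- exp_0. apply exp_le_mono.
    pose proof (le_INR _ _ (Nat.lt_le_incl _ _ Hlt)). nra. }
  nra.
Qed.

Lemma survival_chernoff lam k : 0 <= lam ->
  1 - cdfT l p n k <=
  INR (k + 2) ^ (l - 1) *
  exp (lam * INR n + lam * INR (l - 1) - capacity * (lam - lam ^ 2) * INR k).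
Proof.
  intros Hlam. pose proof capacity_range as HA.
  set (e := exp (- lam)). set (r := 1 - capacity * (1 - e)).
  assert (He : 0 < e <= 1) by (split; [apply exp_pos|unfold e; rewrite <- exp_0; apply exp_le_mono; lra]).
  assert (Hre : e <= r) by (unfold r; nra).
  assert (Hr : 0 < r <= 1) by (unfold r; nra).
  assert (Hk : forall j, (1 <= j <= l)%nat -> (1 - p j) * exp (- lam) + p j <= r).
  { intros j Hj. fold e. unfold r, capacity. pose proof (maxp_ge j Hj). nra. }
  pose proof (majorant_expect_bound l p hp lam r Hlam Hr Hk l (le_n l) k k (le_n k)) as Hmaj.
  pose proof (exp_pos (lam * INR n)).
  eapply Rle_trans; [apply survival_le_majorant; exact Hlam|].
  eapply Rle_trans; [apply Rmult_le_compat_l; [lra|exact Hmaj]|].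
  destruct l as [|d]; [lia|]. simpl majorant_bound. replace (S d - 1)%nat with d by lia.
  assert (Hrk : r ^ k <= exp (- capacity * (lam - lam ^ 2) * INR k)).
  { rewrite Rmult_comm, exp_pow_nat. apply pow_incr. split; [lra|].
    pose proof (exp_ineq1_le (- capacity * (1 - e))).
    pose proof (one_minus_exp_neg_ge lam Hlam) as Hlin. fold e in Hlin. eapply Rle_trans; [|apply exp_le_mono; instantiate (1 := - capacity * (1 - e)); nra].
    unfold r. lra. }
  assert (Hrd : / r ^ d <= exp (lam * INR d)).
  { rewrite Rmult_comm, exp_pow_nat, <- (Rinv_inv (exp lam ^ d)).
    apply Rinv_le_contravar; [apply Rinv_0_lt_compat, pow_lt, exp_pos|].
    rewrite <- pow_inv, <- exp_Ropp. apply pow_incr. fold e. lra. }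
  pose proof (pow_le (INR (k + 2)) d (pos_INR _)). pose proof (pow_le r k ltac:(lra)).
  assert (0 <= / r ^ d) by (apply Rlt_le, Rinv_0_lt_compat, pow_lt; lra).
  replace (lam * INR n + lam * INR d - capacity * (lam - lam ^ 2) * INR k) with
    (lam * INR n + (lam * INR d + (- capacity * (lam - lam ^ 2) * INR k))) by ring.
  rewrite !exp_plus.
  replace (exp (lam * INR n) * (INR (k + 2) ^ d * r ^ k / r ^ d)) with
    (INR (k + 2) ^ d * (exp (lam * INR n) * (/ r ^ d * r ^ k))) by (unfold Rdiv; ring).
  apply Rmult_le_compat_l; auto. apply Rmult_le_compat_l; [lra|].
  apply Rmult_le_compat; auto.
Qed.

(* Lower tail: P[T_n <= k] <= exp(-lam n + A (lam + 2 lam^2) k), since completion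
   requires n ON slots of a worst link m by time k. *)
Lemma cdf_chernoff lam k : 0 <= lam <= 1 ->
  cdfT l p n k <= exp (- lam * INR n + capacity * (lam + 2 * lam ^ 2) * INR k).
Proof.
  intros Hlam. pose proof capacity_range as HA.
  destruct maxp_attained as [m [Hm Em]].
  assert (Hmarkov : cdfT l p n k <=
    expect l p k (fun z => exp (- lam * INR n) * exp (lam * INR (on_count z m 1 k)))).
  { apply expect_le; auto. intros z. unfold indb.
    pose proof (exp_pos (- lam * INR n)). pose proof (exp_pos (lam * INR (on_count z m 1 k))).
    destruct (Nat.eqb_spec (rank_ n z k (S l)) n); [|nra].
    pose proof (rank_le_downstream n z k m l Hm). pose proof (rank_le_on_count n z k m ltac:(lia)).
    rewrite <- exp_plus, <- exp_0. apply exp_le_mono.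
    assert (INR n <= INR (on_count z m 1 k)) by (apply le_INR; lia). nra. }
  rewrite expect_scal in Hmarkov.
  set (w := 1 + capacity * (exp lam - 1)).
  assert (H1 : 1 <= exp lam) by (rewrite <- exp_0; apply exp_le_mono; lra).
  assert (Hw : (1 - p m) * exp lam + p m <= w) by (unfold w, capacity; rewrite Em; lra).
  pose proof (on_count_mgf l p hp lam w m 1 k k Hm (le_n 1) (le_n k) ltac:(unfold w; nra) Hw)
    as Hmgf.
  replace (S k - 1)%nat with k in Hmgf by lia.
  assert (Hwk : w ^ k <= exp (capacity * (lam + 2 * lam ^ 2) * INR k)).
  { rewrite Rmult_comm, exp_pow_nat. apply pow_incr. split; [unfold w; nra|].
    pose proof (exp_ineq1_le (capacity * (exp lam - 1))). pose proof (exp_le_quadratic lam Hlam).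
    eapply Rle_trans; [unfold w; apply H|]. apply exp_le_mono. nra. }
  rewrite exp_plus. pose proof (exp_pos (- lam * INR n)).
  eapply Rle_trans; [exact Hmarkov|]. apply Rmult_le_compat_l; lra.
Qed.

End Tails.

Lemma nonneg_series_bounded (f : nat -> R) (B : R) :
  (forall t, 0 <= f t) -> (forall M, sum_f_R0 f M <= B) ->
  exists S, infinite_sum f S /\ S <= B /\ forall M, sum_f_R0 f M <= S.
Proof.
  intros Hf HB.
  assert (Hg : Un_growing (sum_f_R0 f)) by (intros M; rewrite tech5; specialize (Hf (S M)); lra).
  destruct (growing_cv _ Hg) as [S HS]; [exists B; intros x [i ->]; apply HB|].
  exists S. split; [exact HS|]. split; [|exact (growing_ineq _ _ Hg HS)].
  destruct (Rle_lt_dec S B) as [|Hlt]; auto.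
  destruct (HS (S - B) ltac:(lra)) as [N HN]. specialize (HN N (le_n N)). specialize (HB N).
  unfold R_dist in HN. apply Rabs_def2 in HN. lra.
Qed.

Fixpoint sum_below (f : nat -> R) (M : nat) : R :=
  match M with O => 0 | S M' => sum_below f M' + f M' end.

Lemma sum_below_le f g M : (forall s, (s < M)%nat -> f s <= g s) -> sum_below f M <= sum_below g M.
Proof.
  induction M; simpl; intros H; [lra|].
  pose proof (H M ltac:(lia)). specialize (IHM ltac:(intros; apply H; lia)). lra.
Qed.

Lemma sum_below_plus f g M : sum_below (fun s => f s + g s) M = sum_below f M + sum_below g M.
Proof. induction M; simpl; [lra|]. rewrite IHM. ring. Qed.

Lemma sum_below_scal c f M : sum_below (fun s => c * f s) M = c * sum_below f M.
Proof. induction M; simpl; [ring|]. rewrite IHM. ring. Qed.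

Lemma sum_below_sub_const c f M : sum_below (fun s => c - f s) M = INR M * c - sum_below f M.
Proof. induction M; simpl sum_below; [simpl; ring|]. rewrite IHM, S_INR. ring. Qed.

Lemma sum_below_initial c k M :
  sum_below (fun s => if lt_dec s k then c else 0) M = INR (Nat.min M k) * c.
Proof.
  induction M; simpl sum_below; [simpl; ring|].
  rewrite IHM. destruct (lt_dec M k).
  - replace (Nat.min (S M) k) with (S (Nat.min M k)) by lia. rewrite S_INR. ring.
  - replace (Nat.min (S M) k) with (Nat.min M k) by lia. ring.
Qed.

Lemma sum_below_geometric_tail x K M : 0 <= x < 1 ->
  sum_below (fun s => if le_dec K s then x ^ s else 0) M <= x ^ K / (1 - x).
Proof.
  intros Hx.
  assert (H : sum_below (fun s => if le_dec K s then x ^ s else 0) M * (1 - x) =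
              x ^ K - x ^ (Nat.max K M)).
  { induction M; simpl sum_below; [rewrite Nat.max_0_r; ring|].
    rewrite Rmult_plus_distr_r, IHM. destruct (le_dec K M).
    - rewrite !Nat.max_r by lia. simpl. ring.
    - rewrite !Nat.max_l by lia. ring. }
  pose proof (pow_le x (Nat.max K M) ltac:(lra)).
  apply (Rmult_le_reg_r (1 - x)); [lra|]. unfold Rdiv. rewrite Rmult_assoc, Rinv_l by lra. lra.
Qed.

Section Series.
Variables (l : nat) (p : nat -> R).
Hypothesis hp : forall i, (1 <= i <= l)%nat -> 0 <= p i < 1.
Variable n : nat.
Local Notation cdf := (cdfT l p n).
Local Notation probT := (probT l p n).

(* Abel summation: sum_{t <= M} t P[T = t] = sum_{s < M} (P[T <= M] - P[T <= s]). *)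
Lemma partial_mean_abel M :
  sum_f_R0 (fun t => INR t * probT t) M = sum_below (fun s => cdf M - cdf s) M.
Proof.
  induction M; [simpl; ring|].
  rewrite tech5, IHM, probT_S. simpl sum_below. rewrite !sum_below_sub_const, S_INR. ring.
Qed.

Lemma mean_exists B : (forall M, sum_below (fun s => 1 - cdf s) M <= B) ->
  exists ET, infinite_sum (fun t => INR t * probT t) ET /\ ET <= B /\
    forall M, sum_f_R0 (fun t => INR t * probT t) M <= ET.
Proof.
  intros HB. apply nonneg_series_bounded.
  - intros t. apply Rmult_le_pos; [apply pos_INR|apply probT_nonneg; auto].
  - intros M. rewrite partial_mean_abel. eapply Rle_trans; [|apply (HB M)].
    apply sum_below_le. intros s _. pose proof (cdfT_range l p hp n M). lra.
Qed.

Lemma partial_mean_lower k1 k eta : (k1 <= k)%nat -> (forall s, (s < k1)%nat -> cdf s <= eta) ->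
  INR k1 * (cdf k - eta) <= sum_f_R0 (fun t => INR t * probT t) k.
Proof.
  intros Hk H. rewrite partial_mean_abel.
  replace (INR k1 * (cdf k - eta))
    with (sum_below (fun s => if lt_dec s k1 then cdf k - eta else 0) k)
    by (rewrite sum_below_initial; do 2 f_equal; lia).
  apply sum_below_le. intros s Hs. destruct (lt_dec s k1) as [Hs1|Hs1].
  - specialize (H s Hs1). lra.
  - pose proof (cdfT_mono l p hp n s k ltac:(lia)). lra.
Qed.

Lemma mass_below_bound (x eta : R) : 0 <= eta -> (forall j, INR j < x -> cdf j <= eta) ->
  forall M, sum_f_R0 (fun t => if Rlt_dec (INR t) x then probT t else 0) M <= eta.
Proof.
  intros He Hlow M. induction M.
  - cbn [sum_f_R0]. destruct (Rlt_dec (INR 0) x); [rewrite probT_0; apply Hlow; auto|lra].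
  - destruct (Rlt_dec (INR (S M)) x) as [Hx|Hx].
    + rewrite (sum_eq _ probT), sum_probT; [apply Hlow; auto|].
      intros i Hi. destruct (Rlt_dec (INR i) x) as [|Hi']; auto.
      exfalso. apply Hi'. apply Rle_lt_trans with (INR (S M)); auto. apply le_INR; auto.
    + cbn [sum_f_R0]. destruct (Rlt_dec (INR (S M)) x); [contradiction|]. lra.
Qed.

Lemma mass_above_eq k M :
  sum_f_R0 (fun t => if lt_dec k t then probT t else 0) M =
  if le_dec M k then 0 else cdf M - cdf k.
Proof.
  induction M.
  - simpl. destruct (lt_dec k 0); [lia|]. destruct (le_dec 0 k); [lra|lia].
  - simpl. rewrite IHM. destruct (lt_dec k (S M)).
    + rewrite probT_S. destruct (le_dec M k), (le_dec (S M) k); try lia; [|ring].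
      replace M with k by lia. ring.
    + destruct (le_dec M k), (le_dec (S M) k); try lia. ring.
Qed.

Lemma deviation_prob_bound (x : R) (k : nat) (eta ET eps : R) : 0 <= eta ->
  (forall j, INR j < x -> cdf j <= eta) -> 1 - cdf k <= eta ->
  (forall t : nat, eps < Rabs (INR t - ET) -> INR t < x \/ (k < t)%nat) ->
  exists Pdev, infinite_sum (fun t => if Rlt_dec eps (Rabs (INR t - ET)) then probT t else 0) Pdev
    /\ Pdev <= 2 * eta.
Proof.
  intros He Hlow Hup Hsplit.
  assert (Hnonneg : forall t, 0 <= (if Rlt_dec eps (Rabs (INR t - ET)) then probT t else 0))
    by (intros t; destruct (Rlt_dec _ _); [apply probT_nonneg; auto|lra]).
  assert (Hpartial : forall M,
    sum_f_R0 (fun t => if Rlt_dec eps (Rabs (INR t - ET)) then probT t else 0) M <= 2 * eta).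
  { intros M. eapply Rle_trans.
    - apply (sum_Rle _ (fun t => (if Rlt_dec (INR t) x then probT t else 0) +
                                 (if lt_dec k t then probT t else 0))).
      intros t _. pose proof (probT_nonneg l p hp n t).
      destruct (Rlt_dec eps (Rabs (INR t - ET))) as [Hd|Hd].
      + destruct (Hsplit t Hd) as [Ha|Hb].
        * destruct (Rlt_dec (INR t) x); [|contradiction]. destruct (lt_dec k t); lra.
        * destruct (lt_dec k t); [|contradiction]. destruct (Rlt_dec (INR t) x); lra.
      + destruct (Rlt_dec (INR t) x), (lt_dec k t); lra.
    - rewrite plus_sum, mass_above_eq. pose proof (mass_below_bound x eta He Hlow M).
      destruct (le_dec M k); [pose proof (cdfT_range l p hp n k); lra|].
      pose proof (cdfT_range l p hp n M). lra. }
  destruct (nonneg_series_bounded _ _ Hnonneg Hpartial) as [Pdev [HP [HPle _]]].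
  exists Pdev. auto.
Qed.

End Series.

Lemma pow_le_exp x alpha d : 0 <= x -> 0 < alpha ->
  x ^ d <= (INR d / alpha) ^ d * exp (alpha * x).
Proof.
  intros Hx Ha. destruct d as [|d'].
  - simpl. rewrite Rmult_1_l, <- exp_0. apply exp_le_mono. nra.
  - set (d := S d'). assert (Hd : 0 < INR d) by (apply lt_0_INR; unfold d; lia).
    assert (E : x = INR d / alpha * (alpha * x / INR d)) by (field; split; lra).
    rewrite E at 1. rewrite Rpow_mult_distr. apply Rmult_le_compat_l.
    + apply pow_le. apply Rlt_le, Rdiv_lt_0_compat; lra.
    + replace (alpha * x) with (INR d * (alpha * x / INR d)) at 2 by (field; lra).
      rewrite exp_pow_nat. apply pow_incr. split.
      * apply Rmult_le_pos; [nra|apply Rlt_le, Rinv_0_lt_compat; lra].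
      * pose proof (exp_ineq1_le (alpha * x / INR d)). lra.
Qed.

Lemma exp_neg_le_inv y : 0 < y -> exp (- y) <= 1 / y.
Proof.
  intros Hy. rewrite exp_Ropp. pose proof (exp_ineq1_le y).
  unfold Rdiv. rewrite Rmult_1_l. apply Rinv_le_contravar; lra.
Qed.

Lemma nat_ceil x : 0 <= x -> exists k : nat, x <= INR k <= x + 1.
Proof.
  intros Hx. destruct (archimed x) as [H1 H2].
  assert (Hz : (0 <= up x)%Z) by (apply le_IZR; lra).
  exists (Z.to_nat (up x)). rewrite INR_IZR_INZ, Z2Nat.id by auto. lra.
Qed.

Lemma nat_floor x : 0 <= x -> exists k : nat, x - 1 <= INR k <= x.
Proof.
  intros Hx. destruct (archimed x) as [H1 H2].
  assert (Hz : (0 < up x)%Z) by (apply lt_IZR; lra).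
  exists (Z.to_nat (up x - 1)). rewrite INR_IZR_INZ, Z2Nat.id by lia. rewrite minus_IZR. simpl. lra.
Qed.

Section FarTail.
Variables (l : nat) (p : nat -> R).
Hypothesis hl : (1 <= l)%nat.
Hypothesis hp : forall i, (1 <= i <= l)%nat -> 0 <= p i < 1.
Local Notation A := (capacity l p).

Definition far_const : R := (INR (l - 1) * 16 / A) ^ (l - 1) * exp (A / 8).
Definition far_ratio : R := exp (- A / 16).

Lemma far_const_nonneg : 0 <= far_const.
Proof.
  pose proof (capacity_range l p hl hp). unfold far_const.
  apply Rmult_le_pos; [|apply Rlt_le, exp_pos]. apply pow_le.
  apply Rmult_le_pos; [apply Rmult_le_pos; [apply pos_INR|lra]|apply Rlt_le, Rinv_0_lt_compat; lra].
Qed.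

Lemma far_ratio_range : 0 < far_ratio < 1.
Proof.
  pose proof (capacity_range l p hl hp). split; [apply exp_pos|].
  unfold far_ratio. rewrite <- exp_0. apply exp_increasing. lra.
Qed.

Variable n : nat.

(* survival_chernoff with lam = 1/2, the polynomial factor absorbed by pow_le_exp. *)
Lemma far_survival s : 4 * (INR n + INR (l - 1)) <= A * INR s ->
  1 - cdfT l p n s <= far_const * far_ratio ^ s.
Proof.
  intros H. pose proof (capacity_range l p hl hp) as HA. unfold far_const, far_ratio.
  eapply Rle_trans; [apply (survival_chernoff l p hl hp n (1 / 2) s); lra|].
  assert (E1 : exp (1 / 2 * INR n + 1 / 2 * INR (l - 1) - A * (1 / 2 - (1 / 2) ^ 2) * INR s)
               <= exp (- A * INR s / 8)) by (apply exp_le_mono; nra).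
  assert (E2 : INR (s + 2) ^ (l - 1) <= (INR (l - 1) * 16 / A) ^ (l - 1) * exp (A / 16 * INR (s + 2))).
  { replace (INR (l - 1) * 16 / A) with (INR (l - 1) / (A / 16)) by (field; lra).
    apply pow_le_exp; [apply pos_INR|lra]. }
  rewrite <- exp_pow_nat.
  assert (E3 : exp (A / 16 * INR (s + 2)) * exp (- A * INR s / 8) =
               exp (A / 8) * exp (INR s * (- A / 16)))
    by (rewrite <- !exp_plus; f_equal; rewrite plus_INR; simpl; field).
  pose proof (exp_pos (- A * INR s / 8)). pose proof (pow_le (INR (s + 2)) (l - 1) (pos_INR _)).
  eapply Rle_trans; [apply Rmult_le_compat; [auto|apply Rlt_le, exp_pos|exact E2|exact E1]|].
  rewrite Rmult_assoc, E3. lra.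
Qed.

Lemma survival_sum_bound k K eta : 0 <= eta ->
  (forall s, (k <= s)%nat -> 1 - cdfT l p n s <= eta) ->
  4 * (INR n + INR (l - 1)) <= A * INR K ->
  forall M, sum_below (fun s => 1 - cdfT l p n s) M <=
    INR k + eta * INR K + far_const * (far_ratio ^ K / (1 - far_ratio)).
Proof.
  intros He Hk HK M. pose proof (capacity_range l p hl hp) as HA.
  pose proof far_const_nonneg as HC. pose proof far_ratio_range as Hx.
  eapply Rle_trans.
  - apply (sum_below_le _ (fun s => (if lt_dec s k then 1 else 0) + (if lt_dec s K then eta else 0)
                                   + far_const * (if le_dec K s then far_ratio ^ s else 0))).
    intros s _. pose proof (cdfT_range l p hp n s). pose proof (pow_le far_ratio s ltac:(lra)).
    destruct (lt_dec s k), (lt_dec s K), (le_dec K s); try lia; try nra.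
    + specialize (Hk s ltac:(lia)). nra.
    + assert (Hs : 4 * (INR n + INR (l - 1)) <= A * INR s).
      { eapply Rle_trans; [exact HK|]. apply Rmult_le_compat_l; [lra|apply le_INR; lia]. }
      pose proof (far_survival s Hs). nra.
  - rewrite !sum_below_plus, sum_below_scal, !sum_below_initial.
    pose proof (sum_below_geometric_tail far_ratio K M ltac:(lra)).
    assert (INR (Nat.min M k) <= INR k) by (apply le_INR; lia).
    assert (INR (Nat.min M K) <= INR K) by (apply le_INR; lia).
    pose proof (pos_INR (Nat.min M K)).
    apply Rplus_le_compat; [apply Rplus_le_compat; nra|]. apply Rmult_le_compat_l; lra.
Qed.

End FarTail.

Section LargeN.
Variables (l : nat) (p : nat -> R) (delta : R).
Hypothesis hl : (1 <= l)%nat.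
Hypothesis hp : forall i, (1 <= i <= l)%nat -> 0 <= p i < 1.
Hypothesis hdelta : 0 < delta < 1 / 2.
Variable n : nat.
Local Notation A := (capacity l p).
Local Notation d := (l - 1)%nat.

Definition window : R := Rpower (INR n) (1 / 2 + delta) / (4 * A).

(* Common bound for P[T_n < n/A - window] and P[T_n > n/A + window]. *)
Definition tail_level : R :=
  (3 * INR n / A) ^ d * exp (- Rpower (INR n) (2 * delta) / 512).

Hypothesis hn_big : 64 * (1 + INR d) ^ 2 <= INR n.
Hypothesis hlevel : tail_level <= A / (16 * INR n).
Hypothesis hfar : 8 * far_const l p / (1 - far_ratio l p) <= INR n.

Lemma window_facts :
  (A * window) ^ 2 = INR n * Rpower (INR n) (2 * delta) / 16 /\
  2 * (1 + INR d) <= A * window <= INR n / 4.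
Proof.
  pose proof (capacity_range l p hl hp) as HA. pose proof (pos_INR d).
  assert (Hn : 1 <= INR n) by nra.
  set (P := Rpower (INR n) (1 / 2 + delta)).
  assert (HP2 : P * P = INR n * Rpower (INR n) (2 * delta)).
  { unfold P. rewrite <- Rpower_plus.
    replace (1 / 2 + delta + (1 / 2 + delta)) with (1 + 2 * delta) by field.
    rewrite Rpower_plus, Rpower_1 by lra. reflexivity. }
  assert (He2 : 1 <= Rpower (INR n) (2 * delta))
    by (rewrite <- (Rpower_O (INR n)) by lra; apply Rle_Rpower; lra).
  assert (HPn : P <= INR n)
    by (unfold P; rewrite <- (Rpower_1 (INR n)) at 2 by lra; apply Rle_Rpower; lra).
  assert (HP0 : 0 < P) by (unfold P, Rpower; apply exp_pos).
  replace (A * window) with (P / 4) by (unfold window; fold P; field; lra).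
  split; [simpl; rewrite Rmult_1_r; replace (P / 4 * (P / 4)) with (P * P / 16) by field;
          rewrite HP2; reflexivity|].
  assert (8 * (1 + INR d) <= P) by nra. lra.
Qed.

Lemma window_ge_two : 2 <= window.
Proof.
  pose proof (capacity_range l p hl hp) as HA. destruct window_facts as [_ [Ha _]].
  pose proof (pos_INR d). pose proof (Rmult_le_compat_r window A 1). nra.
Qed.

Lemma tail_level_ge : exp (- Rpower (INR n) (2 * delta) / 512) <= tail_level.
Proof.
  pose proof (capacity_range l p hl hp) as HA. pose proof (pos_INR d).
  assert (H3 : 1 <= 3 * INR n / A).
  { apply (Rmult_le_reg_r A); [lra|]. unfold Rdiv. rewrite Rmult_assoc, Rinv_l by lra. nra. }
  pose proof (pow_R1_Rle _ d H3). pose proof (exp_pos (- Rpower (INR n) (2 * delta) / 512)).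
  unfold tail_level. nra.
Qed.

Lemma tail_level_nonneg : 0 <= tail_level.
Proof. pose proof tail_level_ge. pose proof (exp_pos (- Rpower (INR n) (2 * delta) / 512)). lra. Qed.

(* Lower tail: P[T_n <= j] <= tail_level for j < n/A - window (cdf_chernoff, lam = a / 4n). *)
Lemma lower_tail j : INR j < INR n / A - window -> cdfT l p n j <= tail_level.
Proof.
  intros Hj. pose proof (capacity_range l p hl hp) as HA. pose proof (pos_INR d).
  destruct window_facts as [Ha2 [Ha Han]]. pose proof window_ge_two.
  set (a := A * window) in *. set (nR := INR n) in *.
  assert (HnR : 0 < nR) by nra.
  set (lam := a / (4 * nR)).
  assert (Hlam : 0 <= lam <= 1).
  { unfold lam. split; [apply Rlt_le, Rdiv_lt_0_compat; lra|].
    apply (Rmult_le_reg_r (4 * nR)); [lra|]. unfold Rdiv. rewrite Rmult_assoc, Rinv_l by lra. lra. }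
  eapply Rle_trans; [apply (cdf_chernoff l p hl hp n lam j Hlam)|].
  eapply Rle_trans; [|apply tail_level_ge]. apply exp_le_mono.
  assert (Hu : A * INR j <= nR - a).
  { apply (Rmult_lt_compat_l A) in Hj; [|lra].
    replace (A * (nR / A - window)) with (nR - a) in Hj by (unfold a; field; lra). lra. }
  assert ((lam + 2 * lam ^ 2) * (A * INR j) <= (lam + 2 * lam ^ 2) * (nR - a))
    by (apply Rmult_le_compat_l; nra).
  assert (- lam * nR + (lam + 2 * lam ^ 2) * (nR - a) = - (a ^ 2) / (8 * nR) - 2 * lam ^ 2 * a)
    by (unfold lam; field; lra).
  assert (- (a ^ 2) / (8 * nR) = - Rpower nR (2 * delta) / 128) by (rewrite Ha2; field; lra).
  assert (0 <= 2 * lam ^ 2 * a) by nra.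
  assert (0 <= Rpower nR (2 * delta)) by (unfold Rpower; apply Rlt_le, exp_pos).
  replace (capacity l p * (lam + 2 * lam ^ 2) * INR j) with ((lam + 2 * lam ^ 2) * (A * INR j))
    by ring.
  fold nR. lra.
Qed.

(* Upper tail: P[T_n > k] <= tail_level for n/A + window <= k <= 2n/A
   (survival_chernoff, lam = a / 8n). *)
Lemma upper_tail k : INR n / A + window <= INR k <= 2 * INR n / A ->
  1 - cdfT l p n k <= tail_level.
Proof.
  intros [Hk1 Hk2]. pose proof (capacity_range l p hl hp) as HA. pose proof (pos_INR d).
  destruct window_facts as [Ha2 [Ha Han]]. pose proof window_ge_two.
  set (a := A * window) in *. set (nR := INR n) in *.
  assert (HnR : 64 <= nR) by nra.
  set (lam := a / (8 * nR)).
  assert (Hlam : 0 <= lam <= 1).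
  { unfold lam. split; [apply Rlt_le, Rdiv_lt_0_compat; lra|].
    apply (Rmult_le_reg_r (8 * nR)); [lra|]. unfold Rdiv. rewrite Rmult_assoc, Rinv_l by lra. lra. }
  eapply Rle_trans; [apply (survival_chernoff l p hl hp n lam k); lra|].
  unfold tail_level. apply Rmult_le_compat.
  - apply pow_le, pos_INR.
  - apply Rlt_le, exp_pos.
  - apply pow_incr. split; [apply pos_INR|]. rewrite plus_INR. fold nR. simpl (INR 2).
    assert (2 <= nR / A).
    { apply (Rmult_le_reg_r A); [lra|]. unfold Rdiv. rewrite Rmult_assoc, Rinv_l by lra. nra. }
    replace (3 * nR / A) with (2 * nR / A + nR / A) by (field; lra). lra.
  - apply exp_le_mono.
    assert (Hu : nR + a <= A * INR k).
    { apply (Rmult_le_compat_l A) in Hk1; [|lra].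
      replace (A * (nR / A + window)) with (nR + a) in Hk1 by (unfold a; field; lra). lra. }
    assert ((lam - lam ^ 2) * (nR + a) <= (lam - lam ^ 2) * (A * INR k))
      by (apply Rmult_le_compat_l; nra).
    assert (lam * INR d <= lam * (a / 2)) by (apply Rmult_le_compat_l; lra).
    assert (lam ^ 2 * a <= lam ^ 2 * nR) by (apply Rmult_le_compat_l; nra).
    assert (lam * (a / 2) - lam * a + 2 * lam ^ 2 * nR = - (a ^ 2) / (32 * nR))
      by (unfold lam; field; lra).
    assert (- (a ^ 2) / (32 * nR) = - Rpower nR (2 * delta) / 512) by (rewrite Ha2; field; lra).
    replace (capacity l p * (lam - lam ^ 2) * INR k) with ((lam - lam ^ 2) * (A * INR k)) by ring.
    fold nR. nra.
Qed.

Lemma upper_point : exists k : nat, INR n / A + window <= INR k <= INR n / A + window + 1 /\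
  (forall s, (k <= s)%nat -> 1 - cdfT l p n s <= tail_level).
Proof.
  pose proof (capacity_range l p hl hp) as HA. pose proof (pos_INR d).
  destruct window_facts as [_ [Ha Han]]. pose proof window_ge_two.
  assert (Hw : window + 1 <= INR n / A).
  { apply (Rmult_le_reg_r A); [lra|]. unfold Rdiv. rewrite Rmult_assoc, Rinv_l by lra. nra. }
  destruct (nat_ceil (INR n / A + window)) as [k Hk]; [nra|].
  exists k. split; [lra|]. intros s Hs.
  pose proof (cdfT_mono l p hp n k s Hs).
  assert (1 - cdfT l p n k <= tail_level) by (apply upper_tail; lra). lra.
Qed.

(* The far tail contributes at most 1/2 to E T_n. *)
Lemma far_mass_small K : 4 * (INR n + INR d) <= A * INR K ->
  far_const l p * (far_ratio l p ^ K / (1 - far_ratio l p)) <= 1 / 2.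
Proof.
  intros HK. pose proof (capacity_range l p hl hp) as HA. pose proof (pos_INR d).
  pose proof (far_const_nonneg l p hl hp) as HC. pose proof (far_ratio_range l p hl hp) as Hx.
  assert (Hn : 64 <= INR n) by nra.
  assert (HxK : far_ratio l p ^ K * INR n <= 4).
  { unfold far_ratio. rewrite <- exp_pow_nat.
    assert (exp (INR K * (- A / 16)) <= 4 / INR n).
    { eapply Rle_trans; [apply exp_le_mono; instantiate (1 := - (INR n / 4)); nra|].
      replace (4 / INR n) with (1 / (INR n / 4)) by (field; lra). apply exp_neg_le_inv. lra. }
    apply (Rmult_le_compat_r (INR n)) in H0; [|lra].
    replace (4 / INR n * INR n) with 4 in H0 by (field; lra). lra. }
  assert (8 * far_const l p <= INR n * (1 - far_ratio l p)).
  { apply (Rmult_le_compat_r (1 - far_ratio l p)) in hfar; [|lra].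
    replace (8 * far_const l p / (1 - far_ratio l p) * (1 - far_ratio l p)) with (8 * far_const l p)
      in hfar by (field; lra). lra. }
  apply (Rmult_le_reg_r ((1 - far_ratio l p) * INR n)); [nra|].
  replace (far_const l p * (far_ratio l p ^ K / (1 - far_ratio l p)) * ((1 - far_ratio l p) * INR n))
    with (far_const l p * (far_ratio l p ^ K * INR n)) by (field; lra).
  nra.
Qed.

Lemma mean_location : exists ET, infinite_sum (fun t => INR t * probT l p n t) ET /\
  INR n / A - 2 * window <= ET <= INR n / A + 2 * window.
Proof.
  pose proof (capacity_range l p hl hp) as HA. pose proof (pos_INR d).
  destruct window_facts as [_ [Ha Han]]. pose proof window_ge_two.
  assert (Hn : 64 <= INR n) by nra.
  pose proof tail_level_nonneg as Heta0.
  destruct upper_point as [k [Hk Hupper]].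
  destruct (nat_ceil (4 * (INR n + INR d) / A)) as [K HK]; [apply Rlt_le, Rdiv_lt_0_compat; lra|].
  assert (HKA : 4 * (INR n + INR d) <= A * INR K).
  { destruct HK as [HK' _]. apply (Rmult_le_compat_l A) in HK'; [|lra].
    replace (A * (4 * (INR n + INR d) / A)) with (4 * (INR n + INR d)) in HK' by (field; lra). lra. }
  assert (HetaK : tail_level * INR K <= 1 / 2).
  { eapply Rle_trans; [apply Rmult_le_compat; [lra|apply pos_INR|exact hlevel|apply HK]|].
    apply (Rmult_le_reg_r (16 * INR n)); [lra|].
    replace (A / (16 * INR n) * (4 * (INR n + INR d) / A + 1) * (16 * INR n))
      with (4 * (INR n + INR d) + A) by (field; lra). nra. }
  destruct (mean_exists l p hp n (INR n / A + 2 * window)) as [ET [HET [HETub HETpartial]]].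
  { intros M. eapply Rle_trans; [apply (survival_sum_bound l p hl hp n k K _ Heta0 Hupper HKA)|].
    pose proof (far_mass_small K HKA). lra. }
  exists ET. split; [exact HET|]. split; [|exact HETub].
  destruct (nat_floor (INR n / A - window)) as [k1 Hk1].
  { assert (window <= INR n / A); [|lra].
    apply (Rmult_le_reg_r A); [lra|]. unfold Rdiv. rewrite Rmult_assoc, Rinv_l by lra. nra. }
  assert (Hk1k : (k1 <= k)%nat) by (apply INR_le; lra).
  assert (Hlow : forall s, (s < k1)%nat -> cdfT l p n s <= tail_level).
  { intros s Hs. apply lower_tail. apply lt_INR in Hs. lra. }
  pose proof (partial_mean_lower l p hp n k1 k tail_level Hk1k Hlow) as Hpartial.
  pose proof (HETpartial k). pose proof (Hupper k (le_n k)). pose proof (pos_INR k1).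
  assert (Hk1eta : tail_level * INR k1 <= A / (16 * INR n) * (INR n / A))
    by (apply Rmult_le_compat; lra).
  replace (A / (16 * INR n) * (INR n / A)) with (1 / 16) in Hk1eta by (field; lra).
  nra.
Qed.

Lemma concentration : exists ET, infinite_sum (fun t => INR t * probT l p n t) ET /\
  exists Pdev, infinite_sum (fun t =>
      if Rlt_dec (Rpower (INR n) (1 / 2 + delta) / A) (Rabs (INR t - ET))
      then probT l p n t else 0) Pdev /\
    Pdev <= A / (8 * INR n).
Proof.
  pose proof (capacity_range l p hl hp) as HA. pose proof (pos_INR d).
  pose proof tail_level_nonneg as Heta0.
  destruct mean_location as [ET [HET HETloc]].
  exists ET. split; [exact HET|].
  destruct upper_point as [k [Hk Hupper]].
  assert (Heps : Rpower (INR n) (1 / 2 + delta) / A = 4 * window) by (unfold window; field; lra).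
  assert (Hsplit : forall t : nat, Rpower (INR n) (1 / 2 + delta) / A < Rabs (INR t - ET) ->
                   INR t < INR n / A - window \/ (k < t)%nat).
  { pose proof window_ge_two.
    intros t Ht. rewrite Heps in Ht. unfold Rabs in Ht. destruct (Rcase_abs (INR t - ET)).
    - left. lra.
    - right. apply INR_lt. lra. }
  destruct (deviation_prob_bound l p hp n _ k tail_level ET _ Heta0 lower_tail
              (Hupper k (le_n k)) Hsplit) as [Pdev [HP HPle]].
  exists Pdev. split; [exact HP|].
  assert (0 < INR n) by nra.
  replace (A / (8 * INR n)) with (2 * (A / (16 * INR n))) by (field; lra). lra.
Qed.

End LargeN.

Lemma poly_stretched_exp_small (C alpha b : R) (m : nat) : 0 < alpha -> 0 < b ->
  exists X, forall x, X <= x -> C * x ^ m * exp (- alpha * Rpower x b) <= 1.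
Proof.
  intros Ha Hb.
  destruct (nat_ceil ((INR m + 1) / b)) as [K HK].
  { apply Rlt_le, Rdiv_lt_0_compat; [pose proof (pos_INR m)|]; lra. }
  set (cK := (INR K / alpha) ^ K).
  assert (HcK : 0 <= cK) by (apply pow_le, Rmult_le_pos; [apply pos_INR|apply Rlt_le, Rinv_0_lt_compat; lra]).
  exists (Rmax 1 (Rabs C * cK)). intros x Hx.
  pose proof (Rmax_l 1 (Rabs C * cK)). pose proof (Rmax_r 1 (Rabs C * cK)).
  set (e := Rpower x b).
  assert (He : 0 < e) by (unfold e, Rpower; apply exp_pos).
  assert (Hpow : x ^ S m <= e ^ K).
  { rewrite <- (Rpower_pow (S m) x), <- (Rpower_pow K e) by lra. unfold e.
    rewrite Rpower_mult. apply Rle_Rpower; [lra|]. rewrite S_INR.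
    apply (Rmult_le_reg_r (/ b)); [apply Rinv_0_lt_compat; lra|].
    replace (b * INR K * / b) with (INR K) by (field; lra). unfold Rdiv in HK. lra. }
  assert (Hexp : e ^ K <= cK * exp (alpha * e)) by (apply pow_le_exp; lra).
  pose proof (exp_pos (- alpha * e)). pose proof (pow_le x m ltac:(lra)).
  assert (Hprod : x * (x ^ m * exp (- alpha * e)) <= cK).
  { replace (x * (x ^ m * exp (- alpha * e))) with (x ^ S m * exp (- alpha * e)) by (simpl; ring).
    apply (Rmult_le_reg_r (exp (alpha * e))); [apply exp_pos|].
    rewrite Rmult_assoc, <- exp_plus. replace (- alpha * e + alpha * e) with 0 by ring.
    rewrite exp_0. lra. }
  assert (HC : C * (x ^ m * exp (- alpha * e)) <= Rabs C * (x ^ m * exp (- alpha * e)))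
    by (apply Rmult_le_compat_r; [nra|apply Rle_abs]).
  pose proof (Rabs_pos C).
  assert (Rabs C * (x * (x ^ m * exp (- alpha * e))) <= x) by (apply Rle_trans with (Rabs C * cK); nra).
  rewrite Rmult_assoc. nra.
Qed.

Lemma large_n_conditions l p delta : (1 <= l)%nat -> (forall i, (1 <= i <= l)%nat -> 0 <= p i < 1) ->
  0 < delta < 1 / 2 ->
  exists N : nat, forall n, (N <= n)%nat ->
    64 * (1 + INR (l - 1)) ^ 2 <= INR n /\
    tail_level l p delta n <= capacity l p / (16 * INR n) /\
    8 * far_const l p / (1 - far_ratio l p) <= INR n.
Proof.
  intros hl hp hdelta. pose proof (capacity_range l p hl hp) as HA.
  set (A := capacity l p) in *. set (d := (l - 1)%nat).
  set (C := (3 / A) ^ d * (16 / A)).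
  destruct (poly_stretched_exp_small C (1 / 512) (2 * delta) (S d) ltac:(lra) ltac:(lra)) as [X HX].
  set (B2 := Rmax (64 * (1 + INR d) ^ 2) (8 * far_const l p / (1 - far_ratio l p))).
  set (B := Rmax X B2).
  assert (HXB : X <= B) by apply Rmax_l.
  assert (HB2 : B2 <= B) by apply Rmax_r.
  assert (Hbig : 64 * (1 + INR d) ^ 2 <= B2) by apply Rmax_l.
  assert (Hfar : 8 * far_const l p / (1 - far_ratio l p) <= B2) by apply Rmax_r.
  pose proof (pos_INR d).
  destruct (nat_ceil B) as [N HN]; [nra|].
  exists N. intros n Hn. apply le_INR in Hn.
  assert (Hn1 : 1 <= INR n) by nra.
  split; [lra|]. split; [|lra].
  specialize (HX (INR n) ltac:(lra)). unfold tail_level. fold A d.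
  apply (Rmult_le_reg_r (16 * INR n / A)); [apply Rdiv_lt_0_compat; lra|].
  replace (A / (16 * INR n) * (16 * INR n / A)) with 1 by (field; lra).
  replace ((3 * INR n / A) ^ d * exp (- Rpower (INR n) (2 * delta) / 512) * (16 * INR n / A))
    with (C * INR n ^ S d * exp (- (1 / 512) * Rpower (INR n) (2 * delta))).
  - exact HX.
  - unfold C. replace (3 * INR n / A) with (3 / A * INR n) by (field; lra).
    rewrite Rpow_mult_distr. replace (- (1 / 512) * Rpower (INR n) (2 * delta))
      with (- Rpower (INR n) (2 * delta) / 512) by field.
    simpl. field. lra.
Qed.

(* The right-hand side of Theorem 3 dominates A / (8n): its second term is nonnegative. *)
Lemma theorem3_rhs_ge (A x delta : R) : 0 < A -> 1 < x -> 0 < delta < 1 / 2 ->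
  A / (8 * x) <= 2 * A / x + 2 * A * Rpower x (2 * delta) / (x ^ 2 - Rpower x (1 + 2 * delta)).
Proof.
  intros HA Hx Hd.
  assert (Rpower x (1 + 2 * delta) < x ^ 2)
    by (rewrite <- (Rpower_pow 2 x) by lra; apply Rpower_lt; [lra|simpl; lra]).
  assert (0 <= 2 * A * Rpower x (2 * delta) / (x ^ 2 - Rpower x (1 + 2 * delta))).
  { unfold Rdiv. apply Rmult_le_pos; [|apply Rlt_le, Rinv_0_lt_compat; lra].
    pose proof (exp_pos (2 * delta * ln x)). unfold Rpower. nra. }
  assert (A / (8 * x) <= 2 * A / x).
  { unfold Rdiv. rewrite Rinv_mult. pose proof (Rinv_0_lt_compat x ltac:(lra)). nra. }
  lra.
Qed.

Theorem theorem3 (l : nat) (p : nat -> R) (delta : R)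
  (hl : (1 <= l)%nat)
  (hp : forall i, (1 <= i <= l)%nat -> 0 <= p i < 1)
  (hworst : exists m, (1 <= m <= l)%nat /\
              forall i, (1 <= i <= l)%nat -> i <> m -> p i < p m)
  (hdelta : 0 < delta < 1/2) :
  let A := 1 - maxp l p in
  exists N : nat, forall n : nat, (N <= n)%nat ->
    exists ET : R,
      infinite_sum (fun t => INR t * probT l p n t) ET /\
      exists Pdev : R,
        infinite_sum (fun t =>
          if Rlt_dec (Rpower (INR n) (1/2 + delta) / A) (Rabs (INR t - ET))
          then probT l p n t else 0) Pdev /\
        Pdev <= 2 * A / INR n
                + 2 * A * Rpower (INR n) (2 * delta)
                  / (INR n ^ 2 - Rpower (INR n) (1 + 2 * delta)).
Proof.
  intros A.
  destruct (large_n_conditions l p delta hl hp hdelta) as [N HN].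
  exists N. intros n Hn. destruct (HN n Hn) as [Hbig [Hlevel Hfar]].
  destruct (concentration l p delta hl hp hdelta n Hbig Hlevel Hfar)
    as [ET [HET [Pdev [HPdev Hsmall]]]].
  exists ET. split; [exact HET|]. exists Pdev. split; [exact HPdev|].
  pose proof (capacity_range l p hl hp). pose proof (pos_INR (l - 1)).
  eapply Rle_trans; [exact Hsmall|]. apply theorem3_rhs_ge; [exact (proj1 H)|nra|exact hdelta].
Qed.
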